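(* Let $\alpha$ be a partition all of whose parts are odd (possibly $\alpha$ is the empty partition). Let $t\ge 0$ be an integer, let $\mu=(\alpha,2,2^2,\ldots,2^{t})$ and $\mu'=(\alpha,2^{t+1})$, and let $n=|\mu|$ (so $|\mu'|=n+2$). Then for every integer $j$ with $0\le j\le n-j$ we have $$\chi^{(n-j,j)}(\mu)=\chi^{(n+2-j,1^j)}(\mu').$$
   Context: A partition of $n\in\mathbb{N}_0$ is a weakly decreasing sequence of positive integers (its parts) summing to $n$; $|\lambda|$ denotes the sum of the parts; the only partition of $0$ is the empty partition. For a partition $\alpha$ and positive integers $a,b,\ldots$, $(\alpha,a,b,\ldots)$ denotes the partition whose parts are the parts of $\alpha$ together with $a,b,\ldots$; in particular $(\alpha,2,2^2,\ldots,2^t)$ has the parts of $\alpha$ together with the parts $2,4,8,\ldots,2^t$ (one each, none if $t=0$), and $(\alpha,2^{t+1})$ has the parts of $\alpha$ together with one part equal to $2^{t+1}$. In $(n+2-j,1^j)$ the exponent denotes multiplicity: the hook partition with first part $n+2-j$ followed by $j$ parts equal to $1$. For a partition $\lambda$ of $n$, $\chi^\lambda$ is the irreducible complex character of the symmetric group $S_n$ labelled by $\lambda$ (standard labelling), and $\chi^\lambda(\mu)$ is its value on the conjugacy class of permutations of cycle type $\mu$; for $n=0$, $\chi^{(0)}$ of the empty class is $1$. *)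

From HB Require Import structures.
From mathcomp Require Import all_boot all_order all_algebra all_fingroup.
Set Implicit Arguments. Unset Strict Implicit. Unset Printing Implicit Defensive.
Import GRing.Theory.
Local Open Scope ring_scope.

Definition is_partition (s : seq nat) : bool :=
  sorted geq s && all (fun x => (0 < x)%N) s.

(* Irreducible character chi^la of S_n evaluated on the class of cycle type mu,
   defined by the Frobenius character formula with l := size la variables:
   chi^la(mu) = coefficient of x^(la + delta) in a_delta * p_mu,
   delta = (l-1, l-2, ..., 0), a_delta = sum_s sgn(s) prod_i x_i^(delta_(s i)),
   p_mu = prod_k (x_1^(mu_k) + ... + x_l^(mu_k)).
   Expanding p_mu, the coefficient of x^beta in p_mu is the number of maps f
   from the parts of mu to the variables with sum_(k | f k = i) mu_k = beta_i. *)
Definition chi (la mu : seq nat) : int :=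
  \sum_(s : 'S_(size la))
     (-1) ^+ (odd_perm s) *
     (#|[set f : {ffun 'I_(size mu) -> 'I_(size la)} |
         [forall i : 'I_(size la),
            ((\sum_(k < size mu | f k == i) nth 0%N mu k)
               + ((size la).-1 - s i))%N
            == (nth 0%N la i + ((size la).-1 - i))%N]]|)%:Z.

Definition drop_zero_parts (s : seq nat) : seq nat := [seq x <- s | (0 < x)%N].

From mathcomp Require Import all_boot all_order all_algebra all_fingroup.
From mathcomp Require Import zify ring.
Set Implicit Arguments. Unset Strict Implicit. Unset Printing Implicit Defensive.
Import GRing.Theory Num.Theory.
Local Open Scope ring_scope.

(* Both characters are computed from the Frobenius formula by expanding one power sum
   p_a = x_1^a + ... + x_l^a at a time.  For two-row shapes this gives
   chi^(n-j,j)(mu) = [x^j] (1 - x) prod_k (1 + x^mu_k).  For hooks, every term except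
   two produces a repeated exponent and vanishes, which yields
   chi^(m-j,1^j)(mu) = [x^j] prod_k (1 - (-x)^mu_k) / (1 + x).  In the hook series of mu'
   each odd part a contributes 1 + x^a, while the part 2^(t+1) contributes
   1 - x^(2^(t+1)) = (1 + x) (1 - x) prod_(i=1..t) (1 + x^(2^i)); so it equals
   (1 + x) times the two-row series of mu. *)

Definition load l (mu : seq nat) (f : {ffun 'I_(size mu) -> 'I_l}) (i : 'I_l) : nat :=
  (\sum_(k < size mu | f k == i) nth 0 mu k)%N.
Arguments load {l} mu f i.

(* The coefficient of x^T in a_delta * p_mu in l variables; chi la is the case
   T = la + delta. *)
Definition frob_coef l (T : nat -> nat) (mu : seq nat) : int :=
  \sum_(s : 'S_l) (-1) ^+ odd_perm s *
    #|[set f : {ffun 'I_(size mu) -> 'I_l} |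
       [forall i, load mu f i + (l.-1 - s i) == T i]%N]|%:Z.

Lemma chiE la mu :
  chi la mu = frob_coef (size la) (fun i => nth 0 la i + ((size la).-1 - i))%N mu.
Proof. by []. Qed.

Lemma load_perm l mu (tau : 'S_l) (f : {ffun 'I_(size mu) -> 'I_l}) i :
  load mu [ffun k => tau (f k)] (tau i) = load mu f i.
Proof. by apply: eq_bigl => k; rewrite ffunE (inj_eq perm_inj). Qed.

Lemma frob_coef_perm l (T T' : nat -> nat) mu (tau : 'S_l) :
  (forall i : 'I_l, T' i = T (tau i)) ->
  frob_coef l T' mu = (-1) ^+ odd_perm tau * frob_coef l T mu.
Proof.
move=> T'E; rewrite /frob_coef mulr_sumr (reindex_inj (mulgI tau)) /=.
apply: eq_bigr => s _; rewrite odd_permM signr_addb -mulrA; congr (_ * (_ * _%:Z)).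
have tau_inj : injective (fun f : {ffun 'I_(size mu) -> 'I_l} => [ffun k => tau (f k)]).
  by move=> f g /ffunP fg; apply/ffunP => k; apply: (@perm_inj _ tau); have := fg k; rewrite !ffunE.
rewrite -[in RHS](card_preimset _ tau_inj); apply: eq_card => f; rewrite !inE.
apply/forallP/forallP => Hf i.
- by have := Hf (tau^-1 i)%g; rewrite permM T'E -(load_perm tau) permKV.
- by rewrite permM T'E -(load_perm tau); exact: Hf.
Qed.

Lemma eq_frob_coef l (T T' : nat -> nat) mu :
  (forall i : 'I_l, T' i = T i) -> frob_coef l T' mu = frob_coef l T mu.
Proof.
move=> T'E; rewrite (@frob_coef_perm l T T' mu 1%g) ?odd_perm1 ?mul1r // => i.
by rewrite perm1.
Qed.

Lemma frob_coef_repeat l (T : nat -> nat) mu (p q : 'I_l) :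
  p != q -> T p = T q -> frob_coef l T mu = 0.
Proof.
move=> neq_pq Tpq.
have : frob_coef l T mu = - frob_coef l T mu.
  rewrite {1}(@frob_coef_perm l T T mu (tperm p q)) ?odd_tperm ?neq_pq ?expr1 ?mulN1r //.
  by move=> i; case: tpermP => [->|->|].
by move/eqP; rewrite -addr_eq0 -mulr2n mulrn_eq0 => /eqP.
Qed.

Lemma frob_coef_nil_delta l (T : nat -> nat) :
  (forall i : 'I_l, T i = (l.-1 - i)%N) -> frob_coef l T [::] = 1.
Proof.
move=> TE; rewrite /frob_coef (bigD1 1%g) //= big1 => [|s s_neq1].
  rewrite odd_perm1 mul1r addr0 (_ : [set f | _] = setT) ?cardsT ?card_ffun ?card_ord //.
  by apply/setP => f; rewrite !inE; apply/forallP => i; rewrite /load big_ord0 perm1 TE.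
rewrite (_ : [set f | _] = set0) ?cards0 ?mulr0 //; apply/setP => f; rewrite !inE.
apply/negbTE/forallP => Hf; case/eqP: s_neq1; apply/permP => i; apply/val_inj => /=.
have := ltn_ord (s i); have := ltn_ord i.
by have := Hf i; rewrite perm1 /load big_ord0 TE => /eqP; lia.
Qed.

Definition ffun_cons l n (p : 'I_l * {ffun 'I_n -> 'I_l}) : {ffun 'I_n.+1 -> 'I_l} :=
  [ffun k => if unlift ord0 k is Some k' then p.2 k' else p.1].

Lemma ffun_cons_bij l n : bijective (@ffun_cons l n).
Proof.
exists (fun f : {ffun 'I_n.+1 -> 'I_l} => (f ord0, [ffun k : 'I_n => f (lift ord0 k)])).
  case=> i0 g; rewrite /ffun_cons ffunE unlift_none; congr (_, _).
  by apply/ffunP => k; rewrite !ffunE liftK.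
by move=> f; apply/ffunP => k; rewrite ffunE; case: unliftP => [k'|] ->; rewrite ?ffunE.
Qed.

Lemma load_cons l a mu (i0 : 'I_l) (g : {ffun 'I_(size mu) -> 'I_l}) i :
  load (a :: mu) (ffun_cons (i0, g)) i = ((if i0 == i then a else 0) + load mu g i)%N.
Proof.
rewrite /load big_mkcond big_ord_recl ffunE unlift_none [in RHS]big_mkcond.
by congr (_ + _)%N; apply: eq_bigr => k _; rewrite ffunE liftK.
Qed.

Lemma card_load_cons l a mu (e : 'I_l -> nat) (T : nat -> nat) :
  #|[set f : {ffun 'I_(size (a :: mu)) -> 'I_l} | [forall i, load (a :: mu) f i + e i == T i]%N]| =
  (\sum_(i0 : 'I_l | a <= T i0) #|[set g : {ffun 'I_(size mu) -> 'I_l} |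
      [forall i : 'I_l, load mu g i + e i == if i == i0 :> nat then T i - a else T i]%N]|)%N.
Proof.
set S := [set f | _].
transitivity (\sum_(i0 : 'I_l) \sum_(g | ffun_cons (i0, g) \in S) 1)%N.
  rewrite pair_big_dep -(on_card_preimset (onW_bij _ (@ffun_cons_bij l (size mu)))).
  by rewrite -sum1_card; apply: eq_bigl => -[i0 g]; rewrite !inE.
rewrite [RHS]big_mkcond; apply: eq_bigr => i0 _; rewrite sum1dep_card.
case: leqP => [le_aT | lt_Ta].
  apply: eq_card => g; rewrite !inE; apply: eq_forallb => i; rewrite load_cons.
  have -> : (i == i0 :> nat) = (i0 == i) by rewrite eq_sym.
  case: (eqVneq i0 i) => [<-|ne]; last by rewrite add0n.
  by apply/eqP/eqP; lia.
apply/eqP; rewrite cards_eq0; apply/eqP/setP => g; rewrite !inE.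
by apply/negbTE/forallP => /(_ i0); rewrite load_cons eqxx => /eqP; lia.
Qed.

Lemma frob_coef_cons l (T : nat -> nat) a mu :
  frob_coef l T (a :: mu) =
  \sum_(i0 : 'I_l | (a <= T i0)%N) frob_coef l (fun i => if i == i0 then T i - a else T i)%N mu.
Proof.
rewrite /frob_coef exchange_big /=; apply: eq_bigr => s _.
rewrite (@card_load_cons l a mu (fun i => l.-1 - s i)%N) -natz natr_sum mulr_sumr.
by apply: eq_bigr => i0 _; rewrite natz.
Qed.

Definition segment_cycle (p d i : nat) : nat :=
  (if p < i <= p + d then i.-1 else if i == p then p + d else i)%N.

Lemma frob_coef_segment_cycle l (T T' : nat -> nat) mu p d : (p + d < l)%N ->
  (forall i : 'I_l, T' i = T (segment_cycle p d i)) ->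
  frob_coef l T' mu = (-1) ^+ d * frob_coef l T mu.
Proof.
case: l => // l; elim: d p T' => [|d IH] p T' lt_pdl T'E.
  rewrite mul1r; apply: eq_frob_coef => i; rewrite T'E /segment_cycle.
  by congr T; (repeat case: ifP); lia.
have lt_pl : (p < l.+1)%N by lia.
have lt_p1l : (p.+1 < l.+1)%N by lia.
pose tp := tperm (Ordinal lt_pl) (Ordinal lt_p1l).
have neq_p_p1 : Ordinal lt_pl != Ordinal lt_p1l by rewrite -val_eqE /=; lia.
rewrite (@frob_coef_perm l.+1 (fun i => T (segment_cycle p.+1 d i)) T' mu tp).
  by rewrite (IH p.+1) ?odd_tperm ?neq_p_p1 ?expr1 ?exprS ?mulrA //; lia.
move=> i; rewrite T'E; congr T; rewrite /tp /segment_cycle.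
by case: tpermP => [->|->|/eqP + /eqP]; rewrite -?val_eqE /=; (repeat case: ifP); lia.
Qed.

Lemma frob_coef_one_var mu : frob_coef 1 (fun=> sumn mu) mu = 1.
Proof.
elim: mu => [|a mu IH]; first exact: frob_coef_nil_delta.
rewrite frob_coef_cons big_mkcond big_ord_recl big_ord0 /= leq_addr addr0 -IH.
by apply: eq_frob_coef => -[[|//] ?]; rewrite /= addKn.
Qed.

Definition subset_sum_poly (mu : seq nat) : {poly int} := \prod_(a <- mu) (1 + 'X^a).

Lemma perm_subset_sum_poly s1 s2 : perm_eq s1 s2 -> subset_sum_poly s1 = subset_sum_poly s2.
Proof. exact: perm_big. Qed.

Lemma subset_sum_poly_cat s1 s2 :
  subset_sum_poly (s1 ++ s2) = subset_sum_poly s1 * subset_sum_poly s2.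
Proof. exact: big_cat. Qed.

Lemma coef0_subset_sum_poly mu :
  all (fun a => 0 < a)%N mu -> (subset_sum_poly mu)`_0 = 1.
Proof.
elim: mu => [|a mu IH] /=; first by rewrite /subset_sum_poly big_nil coef1.
case/andP=> a_gt0 /IH; rewrite /subset_sum_poly big_cons coef0M => ->.
by case: a a_gt0 => // a _; rewrite mulr1 coefD coef1 coefXn addr0.
Qed.

Lemma size_subset_sum_poly mu : (size (subset_sum_poly mu) <= (sumn mu).+1)%N.
Proof.
elim: mu => [|a mu IH]; first by rewrite /subset_sum_poly big_nil size_poly1.
rewrite /subset_sum_poly big_cons -/(subset_sum_poly mu).
apply: leq_trans (size_polyMleq _ _) _.
have size_1Xa : (size ((1 + 'X^a)%R : {poly int}) <= a.+1)%N.
  by apply: leq_trans (size_polyD _ _) _; rewrite size_poly1 size_polyXn geq_max leqnn.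
by rewrite -subn1 leq_subLR add1n /= -addnS -addSn leq_add.
Qed.

(* The exponent la + delta for la = (m - j, j). *)
Definition two_row_target (m j : nat) : nat -> nat :=
  fun i => if i == 0%N then (m.+1 - j)%N else j.

Lemma frob_coef_two_row mu j : (j <= (sumn mu).+1)%N ->
  frob_coef 2 (two_row_target (sumn mu) j) mu = ((1 - 'X) * subset_sum_poly mu)`_j.
Proof.
elim: mu j => [|a mu IH] j le_j.
  rewrite /subset_sum_poly big_nil mulr1 coefB coef1 coefX.
  case: j le_j => [|[|//]] _; first by apply: frob_coef_nil_delta => -[[|[|//]] ?].
  rewrite (@frob_coef_segment_cycle 2 (fun i => 1 - i)%N _ _ 0 1) ?frob_coef_nil_delta //.
  by case=> [[|[|//]] ?].
set W := (1 - 'X) * subset_sum_poly mu.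
have -> : (1 - 'X) * subset_sum_poly (a :: mu) = W + 'X^a * W.
  by rewrite /subset_sum_poly big_cons -/(subset_sum_poly mu) mulrCA mulrDl mul1r.
rewrite frob_coef_cons big_mkcond big_ord_recl big_ord1 coefD coefXnM /=.
rewrite /two_row_target /= in le_j *.
congr (_ + _); case: leqP => [le_a | lt_a] //.
- rewrite -IH; last by lia.
  by apply: eq_frob_coef => -[[|[|//]] ?]; rewrite /two_row_target /=; lia.
- have lt_sum_j : (sumn mu < j.-1)%N by lia.
  rewrite /W mulrBl mul1r coefB coefXM; case: j le_j lt_a lt_sum_j => // j _ _ lt_sum_j.
  by rewrite !nth_default ?subrr // (leq_trans (size_subset_sum_poly mu)) //; lia.
- rewrite -IH; last by lia.
  by apply: eq_frob_coef => -[[|[|//]] ?]; rewrite /two_row_target /=; lia.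
Qed.

Definition hook_poly (mu : seq nat) : {poly int} := \prod_(a <- mu) (1 - (- 'X) ^+ a).

(* The truncation of 1 / (1 + X) at degree j. *)
Definition geomN (j : nat) : {poly int} := \poly_(i < j.+1) (-1) ^+ i.

Lemma coef_signM (R : nzRingType) k (p : {poly R}) i : ((-1) ^+ k * p)`_i = (-1) ^+ k * p`_i.
Proof.
elim: k => [|k IH]; first by rewrite !mul1r.
by rewrite !exprS !mulN1r !mulNr coefN IH.
Qed.

Lemma coef_NXnM (R : nzRingType) a (p : {poly R}) k :
  ((- 'X) ^+ a * p)`_k = (-1) ^+ a * (if (k < a)%N then 0 else p`_(k - a)).
Proof. by rewrite (exprNn 'X) -mulrA coef_signM coefXnM. Qed.

Lemma mul_1addX_geomN j : (1 + 'X) * geomN j = 1 - (- 'X) ^+ j.+1.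
Proof.
have geomNE : geomN j = \sum_(i < j.+1) (- 'X) ^+ i.
  by rewrite /geomN poly_def; apply: eq_bigr => i _; rewrite -mul_polyC rmorph_sign -exprNn.
have := subrXX (1 : {poly int}) (- 'X) j.+1; rewrite expr1n opprK => ->.
by rewrite geomNE; congr (_ * _); apply: eq_bigr => i _; rewrite expr1n mul1r.
Qed.

(* The exponent la + delta for la = (m - k, 1^k), padded with zeros to j + 1 parts. *)
Definition hook_target (j m k : nat) : nat -> nat :=
  fun i => (if i == 0 then m + j - k else if i <= k then j.+1 - i else j - i)%N.

Lemma frob_coef_hook_nil j k : (k <= j)%N ->
  frob_coef j.+1 (hook_target j 0 k) [::] = (-1) ^+ k.
Proof.
move=> le_kj; rewrite (@frob_coef_segment_cycle _ (fun i => j - i)%N _ _ 0 k) //.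
  by rewrite frob_coef_nil_delta ?mulr1.
by move=> i; rewrite /hook_target /segment_cycle; (repeat case: ifP); lia.
Qed.

Lemma frob_coef_hook_collision j m k a mu (i0 : 'I_j.+1) :
  (k <= j)%N -> (0 < a)%N -> i0 != 0%N :> nat -> (a <= hook_target j m k i0)%N ->
  (a <= k -> i0 != k.+1 - a :> nat)%N ->
  frob_coef j.+1 (fun i => if i == i0 then hook_target j m k i - a
                           else hook_target j m k i)%N mu = 0.
Proof.
move=> le_kj a_gt0 i0_neq0 le_a i0_neq_b.
have [q [lt_qj q_neq_i0 Tq]] : exists q, [/\ (q < j.+1)%N, q != i0 :> nat &
    hook_target j m k q = (hook_target j m k i0 - a)%N].
  (* Lowering the exponent at i0 by a hits the one at i0 + a, or at i0 + a - 1 when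
     the leg ends in between. *)
  have lt_i0j := ltn_ord i0; rewrite /hook_target.
  case: (boolP (i0 <= k < i0 + a - 1)%N) => ?; [exists (i0 + a - 1)%N | exists (i0 + a)%N];
    by split; move: le_a i0_neq_b; rewrite /hook_target; (repeat case: ifP); lia.
apply: (@frob_coef_repeat _ _ _ i0 (Ordinal lt_qj)); first by rewrite -val_eqE eq_sym.
by rewrite /= eqxx (negbTE q_neq_i0) Tq.
Qed.

Lemma frob_coef_hook_boundary j m k a mu : (0 < a <= k)%N -> (k <= j)%N ->
  frob_coef j.+1 (fun i => if i == k.+1 - a then hook_target j (a + m) k i - a
                           else hook_target j (a + m) k i)%N mu =
  - (-1) ^+ a * frob_coef j.+1 (hook_target j m (k - a)) mu.
Proof.
move=> /andP[a_gt0 le_ak] le_kj.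
rewrite (@frob_coef_segment_cycle _ (hook_target j m (k - a)) _ _ (k.+1 - a) a.-1).
- by rewrite -[X in _ = - (-1) ^+ X * _](prednK a_gt0) exprS mulN1r opprK.
- by lia.
- by move=> i; have := ltn_ord i; rewrite /hook_target /segment_cycle; (repeat case: ifP); lia.
Qed.

Lemma frob_coef_hook mu j k : all (fun a => 0 < a)%N mu -> (k <= j)%N ->
  frob_coef j.+1 (hook_target j (sumn mu) k) mu = (hook_poly mu * geomN j)`_k.
Proof.
elim: mu k => [|a mu IH] k /=.
  by move=> _ le_kj; rewrite /hook_poly big_nil mul1r coef_poly ltnS le_kj frob_coef_hook_nil.
case/andP=> a_gt0 mu_pos le_kj.
rewrite /hook_poly big_cons -/(hook_poly mu) -mulrA mulrBl mul1r coefB coef_NXnM.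
rewrite frob_coef_cons (bigD1 ord0) /=; last by rewrite /hook_target /=; lia.
rewrite -IH // (@eq_frob_coef _ (hook_target j (sumn mu) k)); last first.
  by move=> i; rewrite /hook_target; (repeat case: ifP); lia.
congr (_ + _); case: leqP => [le_ak | lt_ka].
  have lt_bj : (k.+1 - a < j.+1)%N by lia.
  rewrite (bigD1 (Ordinal lt_bj)) /=; last first.
    by rewrite -val_eqE /= /hook_target; (repeat case: ifP); lia.
  rewrite big1 ?addr0 => [|i0 /andP[/andP[le_a i0_neq0] i0_neq_b]]; last first.
    exact: frob_coef_hook_collision.
  by rewrite frob_coef_hook_boundary ?a_gt0 // IH ?mulNr //; lia.
rewrite mulr0 oppr0 big1 // => i0 /andP[le_a i0_neq0].
by apply: frob_coef_hook_collision => //; lia.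
Qed.

Lemma perm_hook_poly s1 s2 : perm_eq s1 s2 -> hook_poly s1 = hook_poly s2.
Proof. exact: perm_big. Qed.

Lemma hook_poly_cat s1 s2 : hook_poly (s1 ++ s2) = hook_poly s1 * hook_poly s2.
Proof. exact: big_cat. Qed.

Lemma hook_poly_odd s : all odd s -> hook_poly s = subset_sum_poly s.
Proof.
move=> odd_s; rewrite /hook_poly /subset_sum_poly big_seq_cond [RHS]big_seq_cond.
apply: eq_bigr => a /andP[/(allP odd_s) odd_a _].
by rewrite (exprNn 'X) -signr_odd odd_a mulN1r opprK.
Qed.

Lemma hook_poly_even a : ~~ odd a -> hook_poly [:: a] = 1 - 'X^a.
Proof.
by move=> even_a; rewrite /hook_poly big_seq1 (exprNn 'X) -signr_odd (negbTE even_a) mul1r.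
Qed.

Lemma coef_mul_1addX_geomN (p : {poly int}) j : ((1 + 'X) * p * geomN j)`_j = p`_j.
Proof.
rewrite -mulrA mulrCA mul_1addX_geomN mulrBr mulr1 coefB mulrC coef_NXnM ltnSn.
by rewrite mulr0 subr0.
Qed.

Lemma iota0S t : iota 0 t.+1 = rcons (iota 0 t) t.
Proof. by rewrite -cats1 -addn1 iotaD. Qed.

Lemma sumn_doubling t : (sumn [seq (2 ^ i.+1)%N | i <- iota 0 t] + 2 = 2 ^ t.+1)%N.
Proof.
elim: t => [//|t IH]; rewrite iota0S map_rcons sumn_rcons.
by rewrite addnAC IH [RHS]expnS mul2n addnn.
Qed.

Lemma subset_sum_poly_doubling t :
  (1 - 'X^2) * subset_sum_poly [seq (2 ^ i.+1)%N | i <- iota 0 t] = 1 - 'X^(2 ^ t.+1)%N.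
Proof.
elim: t => [|t IH]; first by rewrite /subset_sum_poly big_nil mulr1.
rewrite iota0S map_rcons -cats1 subset_sum_poly_cat mulrA IH /subset_sum_poly big_seq1.
by rewrite [in RHS]expnS mul2n -addnn exprD -subr_sqr expr1n expr2.
Qed.

Lemma chi_two_row mu j : all (fun a => 0 < a)%N mu -> (j <= sumn mu - j)%N ->
  chi (drop_zero_parts [:: (sumn mu - j)%N; j]) mu = ((1 - 'X) * subset_sum_poly mu)`_j.
Proof.
move=> mu_pos le_j; rewrite chiE /drop_zero_parts /=.
case: (posnP j) => [-> | j_gt0] /=.
  rewrite mulrBl mul1r coefB coefXM coef0_subset_sum_poly // subr0 subn0.
  case: posnP => [sum0 | sum_gt0] /=.
    have -> : mu = [::] by case: mu {le_j} mu_pos sum0 => // a mu /= /andP[a_gt0 _]; lia.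
    by apply: frob_coef_nil_delta => -[].
  by rewrite -(frob_coef_one_var mu); apply: eq_frob_coef => -[[|//] ?] /=; lia.
rewrite ifT /=; last by lia.
rewrite -frob_coef_two_row; last by lia.
by apply: eq_frob_coef => -[[|[|//]] ?]; rewrite /two_row_target /=; lia.
Qed.

Lemma chi_hook mu j : all (fun a => 0 < a)%N mu -> (j <= sumn mu)%N ->
  chi ((sumn mu - j)%N :: nseq j 1%N) mu = (hook_poly mu * geomN j)`_j.
Proof.
move=> mu_pos le_j; rewrite chiE /= size_nseq -frob_coef_hook //.
apply: eq_frob_coef => -[[|i] lt_ij]; rewrite /hook_target /= ?nth_nseq; (repeat case: ifP); lia.
Qed.

Local Close Scope ring_scope.

Theorem theorem1p2 (alpha : seq nat) (t j : nat) :
  is_partition alpha -> all odd alpha ->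
  let mu := sort geq (alpha ++ [seq 2 ^ i.+1 | i <- iota 0 t]) in
  let mu' := sort geq (alpha ++ [:: 2 ^ t.+1]) in
  let n := sumn mu in
  (j <= n - j)%N ->
  chi (drop_zero_parts [:: n - j; j]) mu = chi (n + 2 - j :: nseq j 1%N) mu'.
Proof.
move=> /andP[_ alpha_pos] odd_alpha mu mu' n le_j.
set L := [seq 2 ^ i.+1 | i <- iota 0 t].
have L_pos : all (fun a => 0 < a)%N L by apply/allP => _ /mapP[i _ ->]; rewrite expn_gt0.
have mu_pos : all (fun a => 0 < a)%N mu by rewrite all_sort all_cat alpha_pos.
have mu'_pos : all (fun a => 0 < a)%N mu' by rewrite all_sort all_cat alpha_pos /= expn_gt0.
have sum_mu' : sumn mu' = n + 2.
  rewrite /n /mu /mu' !(perm_sumn (permEl (perm_sort _ _))) !sumn_cat /= addn0.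
  by rewrite -addnA sumn_doubling.
have hook_mu' : hook_poly mu' = ((1 + 'X) * ((1 - 'X) * subset_sum_poly mu))%R.
  rewrite (perm_hook_poly (permEl (perm_sort _ _))) (perm_subset_sum_poly (permEl (perm_sort _ _))).
  rewrite hook_poly_cat hook_poly_odd // hook_poly_even ?oddX // subset_sum_poly_cat.
  by rewrite -subset_sum_poly_doubling; ring.
rewrite chi_two_row // -sum_mu' chi_hook // ?sum_mu'; last by lia.
by rewrite hook_mu' coef_mul_1addX_geomN.
Qed.
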